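(* Let $\mathrm{G}$ be a non-commutative Lie group belonging to the class $\mathcal{C}$, with Lie algebra $\mathfrak{g}$, and let $\mu$ be a left-invariant pseudo-Riemannian metric on $\mathrm{G}$. Then $\mu$ is flat if and only if the restriction of the inner product $\mu(e)$ to the derived ideal $[\mathfrak{g},\mathfrak{g}]$ is degenerate.
   Context: The class $\mathcal{C}$ consists of the non-commutative Lie groups $\mathrm{G}$ whose Lie algebra $\mathfrak{g}$ satisfies: for all $x,y\in\mathfrak{g}$, the bracket $[x,y]$ is a linear combination of $x$ and $y$. A metric is flat if its Riemann curvature tensor vanishes identically. *)

From HB Require Import structures.
From mathcomp Require Import all_boot all_order all_algebra.
From mathcomp Require Import reals.
Set Implicit Arguments. Unset Strict Implicit. Unset Printing Implicit Defensive.
Import Order.TTheory GRing.Theory Num.Theory.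
Local Open Scope ring_scope.

(* The Lie algebra g of an n-dimensional real Lie group G is identified with
   R^n = 'rV[R]_n, carrying a bracket [.,.] = br.  A left-invariant
   pseudo-Riemannian metric mu on G is the same as the inner product mu(e) on g,
   given by a symmetric nondegenerate Gram matrix B (any signature). *)

Section Defs.
Variable R : realType.
Variable n : nat.
Implicit Types (br : 'rV[R]_n -> 'rV[R]_n -> 'rV[R]_n) (B : 'M[R]_n).

Definition is_lie_bracket br : Prop :=
  [/\ (forall (a : R) x y z, br (a *: x + y) z = a *: br x z + br y z),
      (forall (a : R) x y z, br x (a *: y + z) = a *: br x y + br x z),
      (forall x, br x x = 0) &
      (forall x y z, br x (br y z) + br y (br z x) + br z (br x y) = 0)].

Definition is_pseudo_metric B : Prop := B^T = B /\ \det B != 0.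

Definition ip B (x y : 'rV[R]_n) : R := (x *m B *m y^T) 0 0.

Definition in_class_C br : Prop :=
  (exists x y, br x y != 0) /\
  (forall x y, exists a b : R, br x y = a *: x + b *: y).

(* Koszul formula for left-invariant fields:
   2 mu(nabla_x y, z) = mu([x,y],z) - mu([y,z],x) + mu([z,x],y) *)
Definition koszul br B (x y z : 'rV[R]_n) : R :=
  ip B (br x y) z - ip B (br y z) x + ip B (br z x) y.

(* Levi-Civita connection on left-invariant vector fields: the unique vector
   v with mu(v, e_j) = koszul(x,y,e_j)/2 for all j *)
Definition lc_nabla br B (x y : 'rV[R]_n) : 'rV[R]_n :=
  (2%:R)^-1 *: ((\row_j koszul br B x y (delta_mx 0 j)) *m invmx B).

Definition curv br B (x y z : 'rV[R]_n) : 'rV[R]_n :=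
  lc_nabla br B x (lc_nabla br B y z) - lc_nabla br B y (lc_nabla br B x z)
  - lc_nabla br B (br x y) z.

Definition flat br B : Prop := forall x y z, curv br B x y z = 0.

(* derived ideal [g,g]: span of all brackets (of basis vectors, by bilinearity) *)
Definition derived br : 'M[R]_n :=
  (\sum_(i < n) \sum_(j < n) <<br (delta_mx 0 i) (delta_mx 0 j)>>)%MS.

Definition degenerate_on_derived br B : Prop :=
  exists u : 'rV[R]_n, [/\ (u <= derived br)%MS, u != 0 &
    forall w : 'rV[R]_n, (w <= derived br)%MS -> ip B u w = 0].

End Defs.

From mathcomp Require Import all_boot all_order all_algebra.
From mathcomp Require Import reals.
From mathcomp Require Import ring zify.
Set Implicit Arguments. Unset Strict Implicit. Unset Printing Implicit Defensive.
Import Order.TTheory GRing.Theory Num.Theory.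
Local Open Scope ring_scope.

(* An alternating bilinear bracket with [x,y] in span(x,y) has the form
   [x,y] = l(x) y - l(y) x for a linear form l, and l <> 0 when the bracket is
   nonzero.  Then [g,g] = ker l.  Let h be the mu-dual of l.  The Koszul
   formula gives nabla_x y = mu(x,y) h - l(y) x, whence
   R(x,y)z = mu(h,h) (mu(x,z) y - mu(y,z) x), so mu is flat iff h is null
   (in dimension >= 2).  The orthogonal of ker l is the line spanned by h, so
   mu restricted to ker l is degenerate iff h lies in ker l, i.e. iff
   mu(h,h) = l(h) = 0. *)

Definition lin_form (F : comPzRingType) n (c x : 'rV[F]_n) : F := (c *m x^T) 0 0.

Section LinForm.
Variables (F : comPzRingType) (n : nat) (c : 'rV[F]_n).
Local Notation l := (lin_form c).

Lemma lin_formE x : l x = \sum_i c 0 i * x 0 i.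
Proof. by rewrite /lin_form mxE; apply: eq_bigr => i _; rewrite mxE. Qed.

Lemma lin_formD x y : l (x + y) = l x + l y.
Proof. by rewrite !lin_formE -big_split; apply: eq_bigr => i _; rewrite mxE mulrDr. Qed.

Lemma lin_formZ a x : l (a *: x) = a * l x.
Proof. by rewrite !lin_formE mulr_sumr; apply: eq_bigr => i _; rewrite mxE mulrCA. Qed.

Lemma lin_formB x y : l (x - y) = l x - l y.
Proof. by rewrite lin_formD -scaleN1r lin_formZ mulN1r. Qed.

Lemma lin_form_delta j : l (delta_mx 0 j) = c 0 j.
Proof. by rewrite /lin_form trmx_delta -colE mxE. Qed.

Lemma lin_form_trmx v : (v *m c^T) 0 0 = l v.
Proof. by rewrite /lin_form -[c *m v^T]trmxK trmx_mul trmxK [RHS]mxE. Qed.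

Lemma mul_trmx_eq0 v : (v *m c^T == 0) = (l v == 0).
Proof.
apply/eqP/eqP => [vc0 | lv0]; first by rewrite -lin_form_trmx vc0 mxE.
by apply/matrixP => i j; rewrite !ord1 lin_form_trmx lv0 mxE.
Qed.

End LinForm.

Section Bracket.
Variables (F : fieldType) (n : nat) (br : 'rV[F]_n -> 'rV[F]_n -> 'rV[F]_n).
Hypothesis br_linl : forall a x y z, br (a *: x + y) z = a *: br x z + br y z.
Hypothesis br_linr : forall a x y z, br x (a *: y + z) = a *: br x y + br x z.
Hypothesis br_alt : forall x, br x x = 0.

Local Notation e i := (delta_mx 0 i : 'rV[F]_n).

Lemma br0l z : br 0 z = 0.
Proof.
have := br_linl 1 0 0 z; rewrite !scale1r addr0 => double.
by apply: (addrI (br 0 z)); rewrite addr0 -double.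
Qed.

Lemma br0r z : br z 0 = 0.
Proof.
have := br_linr 1 z 0 0; rewrite !scale1r addr0 => double.
by apply: (addrI (br z 0)); rewrite addr0 -double.
Qed.

Lemma brDl x y z : br (x + y) z = br x z + br y z.
Proof. by rewrite -[x]scale1r br_linl !scale1r. Qed.

Lemma brDr x y z : br z (x + y) = br z x + br z y.
Proof. by rewrite -[x]scale1r br_linr !scale1r. Qed.

Lemma brZl a x z : br (a *: x) z = a *: br x z.
Proof. by rewrite -[a *: x]addr0 br_linl br0l addr0. Qed.

Lemma brZr a x z : br z (a *: x) = a *: br z x.
Proof. by rewrite -[a *: x]addr0 br_linr br0r addr0. Qed.

Lemma brN x y : br x y = - br y x.
Proof.
apply/eqP; rewrite -addr_eq0 eq_sym.
by have := br_alt (x + y); rewrite brDl !brDr !br_alt add0r addr0 => <-.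
Qed.

Lemma br_expand x y :
  br x y = \sum_(i < n) \sum_(j < n) (x 0 i * y 0 j) *: br (e i) (e j).
Proof.
have br_suml I (r : seq I) (G : I -> 'rV_n) z :
    br (\sum_(i <- r) G i) z = \sum_(i <- r) br (G i) z.
  exact: (big_morph (br^~ z) (fun a b => brDl a b z) (br0l z)).
have br_sumr I (r : seq I) (G : I -> 'rV_n) z :
    br z (\sum_(i <- r) G i) = \sum_(i <- r) br z (G i).
  exact: (big_morph (br z) (fun a b => brDr a b z) (br0r z)).
rewrite {1}(row_sum_delta x) br_suml; apply: eq_bigr => i _.
rewrite brZl {1}(row_sum_delta y) br_sumr scaler_sumr; apply: eq_bigr => j _.
by rewrite brZr scalerA.
Qed.

Lemma br_delta_neq0 : (exists x y, br x y != 0) -> exists i j, br (e i) (e j) != 0.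
Proof.
case=> x [y nz_xy].
suff /existsP [i /existsP [j nz_ij]] : [exists i, exists j, br (e i) (e j) != 0].
  by exists i, j.
apply: contraNT nz_xy => /existsPn br_e0.
rewrite br_expand big1 // => i _; rewrite big1 // => j _.
by have /existsPn/(_ j)/negPn/eqP -> := br_e0 i; rewrite scaler0.
Qed.

Lemma nonabelian_dim_gt1 : (exists x y, br x y != 0) -> (1 < n)%N.
Proof.
move=> /br_delta_neq0 [i [j]]; apply: contraNT; rewrite -leqNgt => n_le1.
suff -> : i = j by rewrite br_alt.
by apply: val_inj => /=; move: (ltn_ord i) (ltn_ord j) n_le1; lia.
Qed.

Hypothesis br_span : forall x y, exists a b : F, br x y = a *: x + b *: y.

Lemma br_delta_coord_out i j k : k != i -> k != j -> (br (e i) (e j)) 0 k = 0.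
Proof.
move=> ki kj; have [a [b ->]] := br_span (e i) (e j).
by rewrite !mxE eqxx (negbTE ki) (negbTE kj) !mulr0 addr0.
Qed.

(* Comparing the j- and k-coordinates of [e_i, e_j + e_k] in span(e_i, e_j + e_k). *)
Lemma br_delta_coord_diag i j k :
  i != j -> i != k -> (br (e i) (e j)) 0 j = (br (e i) (e k)) 0 k.
Proof.
move=> ij ik; have [-> // | jk] := eqVneq j k.
have [a [b]] := br_span (e i) (e j + e k); rewrite brDr.
move=> /rowP eq_ijk; move: (eq_ijk j) (eq_ijk k).
have [ji kj ki] : [/\ j != i, k != j & k != i] by split; rewrite eq_sym.
rewrite !mxE !eqxx (br_delta_coord_out ji jk) (br_delta_coord_out ki kj) /=.
rewrite (negbTE ji) (negbTE ki) (negbTE jk) (negbTE kj).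
by rewrite !mulr0 !add0r !addr0 !mulr1 => -> ->.
Qed.

Lemma br_lin_form : exists c, forall x y, br x y = lin_form c x *: y - lin_form c y *: x.
Proof.
(* c_i is the j-th coordinate of [e_i, e_j], independent of j <> i. *)
pose c := \row_i if [pick j | j != i] is Some j then (br (e i) (e j)) 0 j else 0.
have br_diag i j : i != j -> (br (e i) (e j)) 0 j = c 0 i.
  rewrite mxE; case: pickP => [k ki | /(_ j)/=] ij; last by rewrite eq_sym ij.
  by rewrite (br_delta_coord_diag (k := k) ij) // eq_sym.
clearbody c.
have br_delta i j : br (e i) (e j) = c 0 i *: e j - c 0 j *: e i.
  have [<- | ij] := eqVneq i j; first by rewrite br_alt subrr.
  apply/rowP => k; rewrite !mxE.
  have [-> | kj] := eqVneq k j.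
    by rewrite br_diag // eq_sym (negbTE ij) mulr1 mulr0 subr0.
  have [-> | ki] := eqVneq k i.
    by rewrite brN mxE br_diag 1?eq_sym // mulr1 mulr0 sub0r.
  by rewrite br_delta_coord_out // !mulr0 subrr.
exists c => x y; rewrite br_expand.
under eq_bigr => i _ do under eq_bigr => j _ do rewrite br_delta scalerBr !scalerA.
under eq_bigr => i _ do rewrite sumrB.
rewrite sumrB; congr (_ - _).
  rewrite lin_formE scaler_suml; apply: eq_bigr => i _.
  rewrite [in RHS](row_sum_delta y) scaler_sumr; apply: eq_bigr => j _.
  by rewrite scalerA; congr (_ *: _); ring.
rewrite [in RHS](row_sum_delta x) scaler_sumr.
apply: eq_bigr => i _; rewrite lin_formE scaler_suml; apply: eq_bigr => j _.
by rewrite scalerA; congr (_ *: _); ring.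
Qed.

End Bracket.

Section Geometry.
Variables (R : realType) (n : nat) (br : 'rV[R]_n -> 'rV[R]_n -> 'rV[R]_n).
Variables (B : 'M[R]_n) (c : 'rV[R]_n).
Hypothesis br_form : forall x y, br x y = lin_form c x *: y - lin_form c y *: x.
Hypothesis B_sym : B^T = B.
Hypothesis B_unit : B \in unitmx.

Local Notation e i := (delta_mx 0 i : 'rV[R]_n).
Local Notation l := (lin_form c).
Local Notation h := (c *m invmx B).

Lemma ipDl x y z : ip B (x + y) z = ip B x z + ip B y z.
Proof. by rewrite /ip !mulmxDl mxE. Qed.

Lemma ipZl a x z : ip B (a *: x) z = a * ip B x z.
Proof. by rewrite /ip -!scalemxAl mxE. Qed.

Lemma ipBl x y z : ip B (x - y) z = ip B x z - ip B y z.
Proof. by rewrite ipDl -scaleN1r ipZl mulN1r. Qed.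

Lemma ipC x y : ip B x y = ip B y x.
Proof.
rewrite /ip -[in LHS](trmxK (x *m B *m y^T)) mxE.
by rewrite !trmx_mul trmxK B_sym mulmxA.
Qed.

Lemma ipZr a x z : ip B z (a *: x) = a * ip B z x.
Proof. by rewrite ipC ipZl (ipC z). Qed.

Lemma ipBr x y z : ip B z (x - y) = ip B z x - ip B z y.
Proof. by rewrite ipC ipBl !(ipC z). Qed.

Lemma ip_delta x j : ip B x (e j) = (x *m B) 0 j.
Proof. by rewrite /ip trmx_delta -colE mxE. Qed.

Lemma ip_dual_l z : ip B h z = l z.
Proof. by rewrite /ip /lin_form mulmxKV. Qed.

Lemma ip_dual_r z : ip B z h = l z.
Proof. by rewrite ipC ip_dual_l. Qed.

Lemma koszulE x y z : koszul br B x y z = 2 * (ip B x y * l z - l y * ip B x z).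
Proof. by rewrite /koszul !br_form !ipBl !ipZl (ipC z x) (ipC y x) (ipC z y); ring. Qed.

Lemma lc_nablaE x y : lc_nabla br B x y = ip B x y *: h - l y *: x.
Proof.
rewrite /lc_nabla.
have -> : \row_j koszul br B x y (e j) = 2 *: (ip B x y *: c - l y *: (x *m B)).
  apply/rowP => j; rewrite mxE koszulE ip_delta lin_form_delta.
  by move: (x *m B) => xB; rewrite !mxE; ring.
rewrite -scalemxAl scalerA mulVf ?pnatr_eq0 // scale1r mulmxBl.
by rewrite -!scalemxAl mulmxK.
Qed.

Lemma curvE x y z : curv br B x y z = ip B h h *: (ip B x z *: y - ip B y z *: x).
Proof.
rewrite /curv !lc_nablaE br_form !ipBr !ipZr !lin_formB !lin_formZ !ip_dual_r.
by rewrite !ipBl !ipZl (ipC y x); apply/rowP => k; rewrite !mxE; ring.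
Qed.

Lemma flat_iff : (1 < n)%N -> flat br B <-> ip B h h = 0.
Proof.
move=> n_gt1; split=> [flat_B | null_h x y z]; last by rewrite curvE null_h scale0r.
pose i0 : 'I_n := Ordinal (ltnW n_gt1); pose j0 : 'I_n := Ordinal n_gt1.
pose z := (invmx B *m (e i0)^T)^T.
have ip_i0z : ip B (e i0) z = 1.
  by rewrite /ip /z trmxK mulmxA mulmxK // trmx_delta mul_delta_mx mxE !eqxx.
have /rowP/(_ j0) := flat_B (e i0) (e j0) z.
by rewrite curvE ip_i0z !mxE !eqxx /= mulr0 mulr1 subr0 mulr1.
Qed.

Hypothesis br_linl : forall a x y z, br (a *: x + y) z = a *: br x z + br y z.
Hypothesis br_linr : forall a x y z, br x (a *: y + z) = a *: br x y + br x z.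
Hypothesis nonabelian : exists x y, br x y != 0.

Lemma lin_form_eq1 : exists a, l a = 1.
Proof.
have [x [y]] := nonabelian; rewrite br_form.
have [lx0 | lx_neq0] := eqVneq (l x) 0; last by exists ((l x)^-1 *: x); rewrite lin_formZ mulVf.
have [ly0 | ly_neq0] := eqVneq (l y) 0; last by exists ((l y)^-1 *: y); rewrite lin_formZ mulVf.
by rewrite lx0 ly0 !scale0r subrr eqxx.
Qed.

(* Every u in ker l is the bracket [a, u] with l a = 1. *)
Lemma sub_derivedP u : (u <= derived br)%MS <-> l u = 0.
Proof.
split=> [u_der | lu0].
  suff : (derived br <= kermx c^T)%MS.
    by move/(submx_trans u_der); rewrite sub_kermx mul_trmx_eq0 => /eqP.
  apply/sumsmx_subP => i _; apply/sumsmx_subP => j _.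
  by rewrite genmxE sub_kermx mul_trmx_eq0 br_form lin_formB !lin_formZ mulrC subrr.
have [a la1] := lin_form_eq1.
have -> : u = br a u by rewrite br_form la1 lu0 scale1r scale0r subr0.
rewrite (br_expand br_linl br_linr); apply: summx_sub => i _; apply: summx_sub => j _.
apply: scalemx_sub; apply: (sumsmx_sup i) => //; apply: (sumsmx_sup j) => //.
by rewrite genmxE.
Qed.

(* The orthogonal of ker l is spanned by h, and ker l is a hyperplane. *)
Lemma degenerate_iff : degenerate_on_derived br B <-> ip B h h = 0.
Proof.
rewrite ip_dual_l; split=> [[u [/sub_derivedP lu0 u_neq0 u_perp]] | lh0].
  apply: contra_neq_eq u_neq0 => lh_neq0.
  suff uB0 : u *m B = 0 by rewrite -(mulmxK B_unit u) uB0 mul0mx.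
  apply/rowP => k; rewrite -ip_delta [RHS]mxE.
  have /u_perp : (e k - (l (e k) / l h) *: h <= derived br)%MS.
    by apply/sub_derivedP; rewrite lin_formB lin_formZ divfK // subrr.
  by rewrite ipBr ipZr ip_dual_r lu0 mulr0 subr0.
exists h; split => [| | w /sub_derivedP lw0]; last by rewrite ip_dual_l.
- exact/sub_derivedP.
- apply/eqP => h0; have [a] := lin_form_eq1.
  by rewrite -ip_dual_l h0 /ip !mul0mx mxE => /eqP; rewrite eq_sym oner_eq0.
Qed.

End Geometry.

Theorem theorem1p4 (R : realType) (n : nat)
    (br : 'rV[R]_n -> 'rV[R]_n -> 'rV[R]_n) (B : 'M[R]_n) :
  is_lie_bracket br -> in_class_C br -> is_pseudo_metric B ->
  (flat br B <-> degenerate_on_derived br B).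
Proof.
move=> [linl linr alt _] [nonab span] [B_sym detB].
have B_unit : B \in unitmx by rewrite unitmxE unitfE.
have [c br_form] := br_lin_form linl linr alt span.
rewrite (flat_iff br_form B_sym B_unit (nonabelian_dim_gt1 linl linr alt nonab)).
by rewrite (degenerate_iff br_form B_sym B_unit linl linr nonab).
Qed.
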